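(* Consider chained iterated learning in the Gaussian setting with prior $N(\bar\mu,\bar\sigma^2)$, likelihood $N(h,\sigma^2)$, initial teacher distribution $N(\mu_0,\sigma_0^2)$, and sample sizes $m_t$. For any $0<\varepsilon<1$ and any constant $c>0$, the sample size sequence $$m_t=\frac{|\mu_0-\bar\mu|}{\varepsilon}\Bigl(1+\frac1c\Bigr)\Bigl(\frac{\sigma}{\bar\sigma}\Bigr)^2t^{1+c}$$ makes chained iterated learning strongly $\varepsilon$-self-sustaining, i.e., $|\mathbb E\,\mu_t-\mu_0|\le\varepsilon$ for all $t$ and $\sigma_t^2+\operatorname{Var}\mu_t\to0$ as $t\to\infty$.
   Context: Gaussian iterated learning: hypotheses $h\in\mathbb R$; every learner has prior $N(\bar\mu,\bar\sigma^2)$; data generated from hypothesis $h$ is $d=h+\phi$ with $\phi\sim N(0,\sigma^2)$. Learner $0$ is the original teacher, with ''posterior'' $N(\mu_0,\sigma_0^2)$. Write $\tau=1/\sigma^2$, $\bar\tau=1/\bar\sigma^2$. Learner $t\ge1$ receives data $d_{t,1},\dots,d_{t,m_t}$ from learner $t-1$ and Bayes-updates, obtaining the Gaussian posterior $N(\mu_t,\sigma_t^2)$ with $\mu_t=\frac{\bar\tau\bar\mu+\tau(d_{t,1}+\dots+d_{t,m_t})}{\bar\tau+m_t\tau}$ and $1/\sigma_t^2=\bar\tau+m_t\tau$. Each datum is drawn from learner $t-1$'s posterior with noise: the $d_{t,i}$ are mutually independent, each distributed as $N(\mathbb E\mu_{t-1},\operatorname{Var}\mu_{t-1}+\sigma_{t-1}^2+\sigma^2)$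 (with $\mu_0$ deterministic, $\operatorname{Var}\mu_0=0$), so that $\mathbb E\mu_t=\frac{\bar\tau\bar\mu+m_t\tau\,\mathbb E\mu_{t-1}}{\bar\tau+m_t\tau}$ and $\operatorname{Var}\mu_t=\frac{m_t\tau^2}{(\bar\tau+m_t\tau)^2}(\operatorname{Var}\mu_{t-1}+\sigma_{t-1}^2+\sigma^2)$. Iterated learning is $\varepsilon$-self-sustaining if $|\mathbb E\mu_t-\mu_0|\le\varepsilon$ and $\sigma_t^2+\operatorname{Var}\mu_t$ stays bounded for all $t$; strongly $\varepsilon$-self-sustaining if moreover $\sigma_t^2+\operatorname{Var}\mu_t\to0$. *)

From Stdlib Require Import Reals.
Open Scope R_scope.

(* One step of chained Gaussian iterated learning.  State = (E mu_t, Var mu_t, sigma_t^2).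
   tau = 1/sigma^2, taub = 1/sigmab^2; mt = sample size of learner t (real-valued, as in the paper's formula). *)
Definition il_step (tau taub mub mt : R) (st : R * R * R) : R * R * R :=
  let '(E, V, Sg) := st in
  ((taub * mub + mt * tau * E) / (taub + mt * tau),
   mt * tau ^ 2 / (taub + mt * tau) ^ 2 * (V + Sg + / tau),
   / (taub + mt * tau)).

(* State of learner t; learner 0 is the teacher N(mu0, sig0^2) with mu0 deterministic. *)
Fixpoint il_state (mub sigb sig mu0 sig0 : R) (m : nat -> R) (t : nat) : R * R * R :=
  match t with
  | O => (mu0, 0, sig0 ^ 2)
  | S t' => il_step (/ sig ^ 2) (/ sigb ^ 2) mub (m (S t'))
                    (il_state mub sigb sig mu0 sig0 m t')
  end.

Definition il_mean mub sigb sig mu0 sig0 m t : R :=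
  fst (fst (il_state mub sigb sig mu0 sig0 m t)).
Definition il_var mub sigb sig mu0 sig0 m t : R :=
  snd (fst (il_state mub sigb sig mu0 sig0 m t)).
Definition il_sig2 mub sigb sig mu0 sig0 m t : R :=
  snd (il_state mub sigb sig mu0 sig0 m t).

Definition strongly_self_sustaining (mub sigb sig mu0 sig0 : R) (m : nat -> R) (eps : R) : Prop :=
  (forall t, Rabs (il_mean mub sigb sig mu0 sig0 m t - mu0) <= eps) /\
  (exists B, forall t, il_sig2 mub sigb sig mu0 sig0 m t + il_var mub sigb sig mu0 sig0 m t <= B) /\
  Un_cv (fun t => il_sig2 mub sigb sig mu0 sig0 m t + il_var mub sigb sig mu0 sig0 m t) 0.

(* The sample size schedule m_t = |mu0 - mub|/eps (1 + 1/c) (sig/sigb)^2 t^(1+c)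
   (only used for t >= 1). *)
Definition m_sched (mub sigb sig mu0 eps c : R) (t : nat) : R :=
  Rabs (mu0 - mub) / eps * (1 + / c) * (sig / sigb) ^ 2 * Rpower (INR t) (1 + c).

From Stdlib Require Import Reals Lra Lia.
Open Scope R_scope.

(* Each learner moves the mean towards the prior mean by the gain
   a_t = m_t tau / (taub + m_t tau), so E mu_t - mub = a_t (E mu_(t-1) - mub) and
   |E mu_t - mu0| <= |mu0 - mub| sum_(s<=t) (1 - a_s) <= |mu0 - mub| sum_(s<=t) taub / (m_s tau).
   For m_s proportional to s^(1+c) the last sum is a multiple of a p-series, whose partial
   sums stay below 1 + 1/c by the telescoping estimate s^-(1+c) <= ((s-1)^-c - s^-c) / c;
   the constant of the schedule turns the bound into eps.  Each step also shrinks the total variance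
   sigma_t^2 + Var mu_t by the factor 1/m_t up to an additive 2 sigma^2, and m_t -> oo
   forces it to 0. *)

Lemma ln_le_sub_1 x : 0 < x -> ln x <= x - 1.
Proof.
  intros Hx. pose proof (exp_ineq1_le (ln x)) as H.
  rewrite exp_ln in H by exact Hx. lra.
Qed.

Lemma Rpower_pos x y : 0 < Rpower x y.
Proof. apply exp_pos. Qed.

Lemma Rpower_base_1 y : Rpower 1 y = 1.
Proof. unfold Rpower. rewrite ln_1, Rmult_0_r. apply exp_0. Qed.

Lemma Rpower_ge_base x c : 1 <= x -> 0 <= c -> x <= Rpower x (1 + c).
Proof.
  intros Hx Hc. rewrite Rpower_plus, Rpower_1 by lra.
  pose proof (Rle_Rpower x 0 c Hx Hc) as H. rewrite Rpower_O in H by lra.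
  nra.
Qed.

Lemma Rpower_succ_ge n c : 0 < n -> 0 <= c ->
  Rpower n c * (1 + c / (n + 1)) <= Rpower (n + 1) c.
Proof.
  intros Hn Hc.
  assert (Hgap : / (n + 1) <= ln (n + 1) - ln n).
  { pose proof (ln_le_sub_1 (n / (n + 1)) ltac:(apply Rdiv_lt_0_compat; lra)) as H.
    unfold Rdiv in H. rewrite ln_mult, ln_Rinv in H
      by (try apply Rinv_0_lt_compat; lra).
    replace (n * / (n + 1) - 1) with (- / (n + 1)) in H by (field; lra).
    lra. }
  assert (Hsplit : Rpower (n + 1) c = Rpower n c * exp (c * (ln (n + 1) - ln n))).
  { unfold Rpower. rewrite <- exp_plus. f_equal. ring. }
  rewrite Hsplit. apply Rmult_le_compat_l; [left; apply Rpower_pos|].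
  pose proof (exp_ineq1_le (c * (ln (n + 1) - ln n))).
  assert (c * / (n + 1) <= c * (ln (n + 1) - ln n)) by (apply Rmult_le_compat_l; lra).
  unfold Rdiv. lra.
Qed.

Lemma inv_Rpower_succ_le n c : 0 < n -> 0 < c ->
  / Rpower (n + 1) (1 + c) <= (/ Rpower n c - / Rpower (n + 1) c) / c.
Proof.
  intros Hn Hc.
  pose proof (Rpower_succ_ge n c Hn (Rlt_le _ _ Hc)) as Hq.
  rewrite Rpower_plus, Rpower_1 by lra.
  pose proof (Rpower_pos n c) as Hp0. pose proof (Rpower_pos (n + 1) c) as Hq0.
  set (p := Rpower n c) in *. set (q := Rpower (n + 1) c) in *.
  assert (Hcp : c * p <= (n + 1) * (q - p)).
  { replace (p * (1 + c / (n + 1))) with (p + c * p / (n + 1)) in Hq by (field; lra).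
    apply (Rmult_le_compat_l (n + 1)) in Hq; [|lra].
    replace ((n + 1) * (p + c * p / (n + 1))) with ((n + 1) * p + c * p) in Hq
      by (field; lra).
    lra. }
  assert (Hdiff : 0 <= ((n + 1) * (q - p) - c * p) * / (c * p * q * (n + 1))).
  { apply Rmult_le_pos; [lra|]. left. apply Rinv_0_lt_compat.
    repeat apply Rmult_lt_0_compat; lra. }
  replace (((n + 1) * (q - p) - c * p) * / (c * p * q * (n + 1)))
    with ((/ p - / q) / c - / ((n + 1) * q)) in Hdiff by (field; lra).
  lra.
Qed.

Lemma p_series_partial_sum_le c : 0 < c -> forall t,
  sum_f_R0 (fun s => / Rpower (INR (S s)) (1 + c)) t
    <= 1 + / c - / (c * Rpower (INR (S t)) c).
Proof.
  intros Hc t. induction t as [|t IH].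
  - simpl. rewrite !Rpower_base_1, Rmult_1_r, Rinv_1. lra.
  - rewrite tech5. cbv beta. rewrite (S_INR (S t)).
    pose proof (pos_INR t) as Ht. rewrite S_INR in IH |- *.
    pose proof (inv_Rpower_succ_le (INR t + 1) c ltac:(lra) Hc) as Hstep.
    pose proof (Rpower_pos (INR t + 1) c). pose proof (Rpower_pos (INR t + 1 + 1) c).
    replace (/ (c * Rpower (INR t + 1) c)) with (/ Rpower (INR t + 1) c / c) in IH
      by (field; lra).
    replace (/ (c * Rpower (INR t + 1 + 1) c)) with (/ Rpower (INR t + 1 + 1) c / c)
      by (field; lra).
    unfold Rdiv in *. lra.
Qed.

Section Contraction.

Variables d a : nat -> R.
Hypothesis a_unit : forall t, 0 <= a t <= 1.
Hypothesis d_S : forall t, d (S t) = a t * d t.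

Lemma contraction_Rabs_le t : Rabs (d t) <= Rabs (d O).
Proof.
  induction t as [|t IH]; [lra|].
  rewrite d_S, Rabs_mult, (Rabs_pos_eq (a t)) by apply a_unit.
  destruct (a_unit t). pose proof (Rabs_pos (d t)). nra.
Qed.

Lemma contraction_drift_le t :
  Rabs (d (S t) - d O) <= Rabs (d O) * sum_f_R0 (fun s => 1 - a s) t.
Proof.
  assert (Hstep : forall t, Rabs (d (S t) - d t) <= (1 - a t) * Rabs (d O)).
  { intros s. rewrite d_S.
    replace (a s * d s - d s) with (- ((1 - a s) * d s)) by ring.
    rewrite Rabs_Ropp, Rabs_mult, Rabs_pos_eq by (destruct (a_unit s); lra).
    apply Rmult_le_compat_l; [destruct (a_unit s); lra | apply contraction_Rabs_le]. }
  induction t as [|t IH].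
  - simpl. rewrite Rmult_comm. apply Hstep.
  - rewrite tech5. cbv beta.
    replace (d (S (S t)) - d O) with ((d (S (S t)) - d (S t)) + (d (S t) - d O)) by ring.
    eapply Rle_trans; [apply Rabs_triang|].
    pose proof (Hstep (S t)). lra.
Qed.

End Contraction.

Section VanishingRate.

Variables (s r : nat -> R) (C : R).
Hypothesis C_ge0 : 0 <= C.
Hypothesis s_ge0 : forall t, 0 <= s t.
Hypothesis r_ge0 : forall t, 0 <= r t.
Hypothesis r_cv0 : Un_cv r 0.
Hypothesis s_S_le : forall t, s (S t) <= r t * (s t + C).

(* Once r t <= 1/2, s (S t) <= (s t + C) / 2 <= max (s t) C. *)
Lemma vanishing_rate_eventually_bounded : exists N M, forall t, (N <= t)%nat -> s t <= M.
Proof.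
  destruct (r_cv0 (/ 2) ltac:(lra)) as [N HN].
  exists N, (Rmax (s N) C). intros t Ht. induction Ht as [|t Ht IH].
  - apply Rmax_l.
  - eapply Rle_trans; [apply s_S_le|].
    specialize (HN t Ht). unfold R_dist in HN.
    rewrite Rminus_0_r, Rabs_pos_eq in HN by apply r_ge0.
    pose proof (Rmax_r (s N) C). pose proof (s_ge0 t). pose proof (r_ge0 t). nra.
Qed.

Lemma vanishing_rate_cv0 : Un_cv s 0.
Proof.
  destruct vanishing_rate_eventually_bounded as (N & M & HM).
  assert (HM0 : 0 <= M) by (pose proof (s_ge0 N); pose proof (HM N (le_n N)); lra).
  intros e He.
  destruct (r_cv0 (e / (M + C + 1))) as [N1 HN1].
  { apply Rdiv_lt_0_compat; lra. }
  exists (S (N + N1)). intros [|t] Ht; [lia|].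
  unfold R_dist. rewrite Rminus_0_r, Rabs_pos_eq by apply s_ge0.
  specialize (HN1 t ltac:(lia)). unfold R_dist in HN1.
  rewrite Rminus_0_r, Rabs_pos_eq in HN1 by apply r_ge0.
  pose proof (HM t ltac:(lia)). pose proof (s_ge0 t). pose proof (r_ge0 t).
  eapply Rle_lt_trans; [apply s_S_le|].
  apply Rle_lt_trans with (r t * (M + C + 1)); [nra|].
  apply (Rmult_lt_compat_r (M + C + 1)) in HN1; [|lra].
  replace (e / (M + C + 1) * (M + C + 1)) with e in HN1 by (field; lra).
  exact HN1.
Qed.

End VanishingRate.

Definition il_gain (tau taub mt : R) : R := mt * tau / (taub + mt * tau).

Section Step.

Variables tau taub mub mt : R.
Hypothesis tau_pos : 0 < tau.
Hypothesis taub_pos : 0 < taub.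
Hypothesis mt_pos : 0 < mt.

Lemma il_gain_bounds : 0 <= il_gain tau taub mt <= 1.
Proof.
  unfold il_gain. assert (0 < mt * tau) by nra. split.
  - left. apply Rdiv_lt_0_compat; lra.
  - apply (Rmult_le_reg_r (taub + mt * tau)); [lra|].
    unfold Rdiv. rewrite Rmult_assoc, Rinv_l; lra.
Qed.

Lemma one_sub_il_gain_le : 1 - il_gain tau taub mt <= taub / (mt * tau).
Proof.
  unfold il_gain. assert (0 < mt * tau) by nra.
  replace (1 - mt * tau / (taub + mt * tau)) with (taub / (taub + mt * tau)) by (field; lra).
  unfold Rdiv. apply Rmult_le_compat_l; [lra|].
  apply Rinv_le_contravar; lra.
Qed.

Lemma il_step_mean E V Sg :
  fst (fst (il_step tau taub mub mt (E, V, Sg))) - mub = il_gain tau taub mt * (E - mub).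
Proof. unfold il_step, il_gain. simpl. field. nra. Qed.

Lemma il_step_var_sig2_nonneg E V Sg : 0 <= V -> 0 <= Sg ->
  0 <= snd (fst (il_step tau taub mub mt (E, V, Sg))) /\
  0 <= snd (il_step tau taub mub mt (E, V, Sg)).
Proof.
  intros HV HSg. unfold il_step; cbn [fst snd]. assert (0 < mt * tau) by nra.
  pose proof (Rinv_0_lt_compat tau tau_pos). split.
  - apply Rmult_le_pos; [|lra].
    apply Rlt_le, Rdiv_lt_0_compat; [|apply pow_lt; lra].
    apply Rmult_lt_0_compat; [lra | apply pow_lt; lra].
  - left. apply Rinv_0_lt_compat. lra.
Qed.

Lemma il_step_total_var_le E V Sg : 0 <= V -> 0 <= Sg ->
  snd (il_step tau taub mub mt (E, V, Sg)) + snd (fst (il_step tau taub mub mt (E, V, Sg)))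
    <= / mt * (Sg + V + 2 / tau).
Proof.
  intros HV HSg. unfold il_step; cbn [fst snd]. assert (0 < mt * tau) by nra.
  pose proof (Rinv_0_lt_compat tau tau_pos).
  assert (Hvar : mt * tau ^ 2 / (taub + mt * tau) ^ 2 <= / mt).
  { replace (mt * tau ^ 2 / (taub + mt * tau) ^ 2)
      with (/ mt * ((mt * tau) / (taub + mt * tau)) ^ 2) by (field; lra).
    pose proof il_gain_bounds as Hg. unfold il_gain in Hg.
    rewrite <- (Rmult_1_r (/ mt)) at 2.
    apply Rmult_le_compat_l; [left; apply Rinv_0_lt_compat, mt_pos | nra]. }
  assert (Hsig : / (taub + mt * tau) <= / mt * (1 / tau)).
  { replace (/ mt * (1 / tau)) with (/ (mt * tau)) by (field; lra).
    apply Rinv_le_contravar; lra. }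
  assert (mt * tau ^ 2 / (taub + mt * tau) ^ 2 * (V + Sg + / tau) <= / mt * (V + Sg + / tau))
    by (apply Rmult_le_compat_r; lra).
  replace (/ mt * (Sg + V + 2 / tau)) with (/ mt * (1 / tau) + / mt * (V + Sg + / tau))
    by (field; lra).
  lra.
Qed.

End Step.

Section Chain.

Variables (mub sigb sig mu0 sig0 : R) (m : nat -> R).
Hypothesis sigb_pos : 0 < sigb.
Hypothesis sig_pos : 0 < sig.
Hypothesis m_pos : forall t, 0 < m (S t).

Local Notation tau := (/ sig ^ 2).
Local Notation taub := (/ sigb ^ 2).
Local Notation state := (il_state mub sigb sig mu0 sig0 m).
Local Notation mean := (il_mean mub sigb sig mu0 sig0 m).
Local Notation var := (il_var mub sigb sig mu0 sig0 m).
Local Notation sig2 := (il_sig2 mub sigb sig mu0 sig0 m).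

Definition il_total_var t : R := sig2 t + var t.

Local Lemma tau_pos : 0 < tau.
Proof. apply Rinv_0_lt_compat, pow_lt, sig_pos. Qed.

Local Lemma taub_pos : 0 < taub.
Proof. apply Rinv_0_lt_compat, pow_lt, sigb_pos. Qed.

Lemma il_state_S t : state (S t) = il_step tau taub mub (m (S t)) (state t).
Proof. reflexivity. Qed.

Lemma il_mean_S t : mean (S t) - mub = il_gain tau taub (m (S t)) * (mean t - mub).
Proof.
  unfold il_mean. rewrite il_state_S.
  destruct (state t) as [[E V] Sg]. apply il_step_mean; auto using tau_pos, taub_pos.
Qed.

Lemma il_var_sig2_nonneg t : 0 <= var t /\ 0 <= sig2 t.
Proof.
  induction t as [|t IH].
  - unfold il_var, il_sig2; simpl. split; [lra | apply pow2_ge_0].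
  - unfold il_var, il_sig2 in *. rewrite il_state_S.
    destruct (state t) as [[E V] Sg]. simpl in IH.
    apply il_step_var_sig2_nonneg; try tauto; auto using tau_pos, taub_pos.
Qed.

Lemma il_total_var_S t : il_total_var (S t) <= / m (S t) * (il_total_var t + 2 * sig ^ 2).
Proof.
  pose proof (il_var_sig2_nonneg t) as Hnn.
  unfold il_total_var, il_var, il_sig2 in *. rewrite il_state_S.
  replace (2 * sig ^ 2) with (2 / tau) by (field; lra).
  destruct (state t) as [[E V] Sg]. simpl in Hnn.
  apply il_step_total_var_le; try tauto; auto using tau_pos, taub_pos.
Qed.

Lemma il_mean_drift_le t :
  Rabs (mean (S t) - mu0) <= Rabs (mu0 - mub) * sum_f_R0 (fun s => taub / (m (S s) * tau)) t.
Proof.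
  assert (Hmean0 : mean O = mu0) by reflexivity.
  pose (gain := fun s => il_gain tau taub (m (S s))).
  assert (Hdrift := contraction_drift_le (fun t => mean t - mub) gain
    (fun s => il_gain_bounds _ _ _ tau_pos taub_pos (m_pos s)) il_mean_S t).
  cbv beta in Hdrift. rewrite Hmean0 in Hdrift.
  replace (mean (S t) - mu0) with (mean (S t) - mub - (mu0 - mub)) by ring.
  eapply Rle_trans; [exact Hdrift|].
  apply Rmult_le_compat_l; [apply Rabs_pos|].
  apply sum_Rle. intros s _. apply one_sub_il_gain_le; auto using tau_pos, taub_pos.
Qed.

Lemma il_total_var_cv0 : cv_infty (fun t => m (S t)) -> Un_cv il_total_var 0.
Proof.
  intros Hinf.
  apply (vanishing_rate_cv0 _ (fun t => / m (S t)) (2 * sig ^ 2)).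
  - pose proof (pow2_ge_0 sig). lra.
  - intros t. destruct (il_var_sig2_nonneg t). unfold il_total_var. lra.
  - intros t. left. apply Rinv_0_lt_compat, m_pos.
  - exact (cv_infty_cv_0 _ Hinf).
  - exact il_total_var_S.
Qed.

End Chain.

Section Schedule.

Variables mub sigb sig mu0 eps c : R.
Hypothesis sigb_pos : 0 < sigb.
Hypothesis sig_pos : 0 < sig.
Hypothesis eps_pos : 0 < eps.
Hypothesis c_pos : 0 < c.
Hypothesis mu0_neq_mub : mu0 <> mub.

Local Notation m := (m_sched mub sigb sig mu0 eps c).
Local Notation K := (Rabs (mu0 - mub) / eps * (1 + / c) * (sig / sigb) ^ 2).

Local Lemma m_sched_coef_pos : 0 < K.
Proof.
  pose proof (Rabs_pos_lt (mu0 - mub) ltac:(lra)).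
  pose proof (Rinv_0_lt_compat c c_pos).
  repeat apply Rmult_lt_0_compat; try lra.
  all: first [apply Rinv_0_lt_compat; lra | apply pow_lt, Rdiv_lt_0_compat; lra].
Qed.

Lemma m_sched_pos t : 0 < m (S t).
Proof. apply Rmult_lt_0_compat; [apply m_sched_coef_pos | apply Rpower_pos]. Qed.

Lemma m_sched_cv_infty : cv_infty (fun t => m (S t)).
Proof.
  intros M. pose proof m_sched_coef_pos as HK. set (k := K) in HK.
  destruct (INR_unbounded (M / k)) as [N HN].
  exists N. intros t Ht.
  assert (Hle : INR N <= INR (S t)) by (apply le_INR; lia).
  pose proof (Rpower_ge_base (INR (S t)) c ltac:(rewrite S_INR; pose proof (pos_INR t); lra)
                (Rlt_le _ _ c_pos)).
  change (m (S t)) with (k * Rpower (INR (S t)) (1 + c)).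
  apply Rlt_le_trans with (k * INR (S t)); [|apply Rmult_le_compat_l; lra].
  apply (Rmult_lt_compat_l k) in HN; [|exact HK].
  replace (k * (M / k)) with M in HN by (field; lra).
  nra.
Qed.

Lemma m_sched_defect_sum_le t :
  Rabs (mu0 - mub) * sum_f_R0 (fun s => / sigb ^ 2 / (m (S s) * / sig ^ 2)) t <= eps.
Proof.
  pose proof (Rabs_pos_lt (mu0 - mub) ltac:(lra)) as HD. set (D := Rabs (mu0 - mub)) in *.
  (* taub / (m s tau) = k s^-(1+c), and k (1 + 1/c) |mu0 - mub| = eps. *)
  set (k := eps * c / (D * (1 + c))).
  rewrite (sum_eq _ (fun s => / Rpower (INR (S s)) (1 + c) * k)).
  2:{ intros s _. unfold m_sched, k. fold D. pose proof (Rpower_pos (INR (S s)) (1 + c)).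
      field. repeat split; lra. }
  rewrite <- scal_sum.
  pose proof (p_series_partial_sum_le c c_pos t) as Hsum.
  pose proof (Rpower_pos (INR (S t)) c).
  assert (0 < / (c * Rpower (INR (S t)) c)) by (apply Rinv_0_lt_compat; nra).
  assert (Hk : 0 < k) by (unfold k; apply Rdiv_lt_0_compat; nra).
  assert (Heps : D * (k * (1 + / c)) = eps) by (unfold k; field; lra).
  rewrite <- Heps. apply Rmult_le_compat_l; [lra|].
  apply Rmult_le_compat_l; lra.
Qed.

End Schedule.

Theorem theorem3 (mub sigb sig mu0 sig0 eps c : R) :
  0 < sigb -> 0 < sig -> 0 < sig0 ->
  0 < eps -> eps < 1 -> 0 < c ->
  mu0 <> mub ->
  strongly_self_sustaining mub sigb sig mu0 sig0 (m_sched mub sigb sig mu0 eps c) eps.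
Proof.
  intros Hsigb Hsig _ Heps _ Hc Hne.
  set (m := m_sched mub sigb sig mu0 eps c).
  pose proof (m_sched_pos mub sigb sig mu0 eps c Hsigb Hsig Heps Hc Hne) as Hm.
  assert (Hcv : Un_cv (il_total_var mub sigb sig mu0 sig0 m) 0).
  { apply il_total_var_cv0; auto. apply m_sched_cv_infty; auto. }
  split; [|split].
  - intros [|t].
    + unfold il_mean; simpl. rewrite Rminus_diag, Rabs_R0. lra.
    + eapply Rle_trans; [apply il_mean_drift_le; auto|].
      apply m_sched_defect_sum_le; auto.
  - destruct (maj_by_pos _ (exist _ 0 Hcv)) as (B & _ & HB).
    exists B. intros t. eapply Rle_trans; [apply Rle_abs | apply HB].
  - exact Hcv.
Qed.
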